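(* Let $d\in\mathbb{N}$, $c=10d+2400$, and let $K$ be a positive real number. Define $b:\mathbb{N}\to(0,\infty)$ by \[ b(s)=\begin{cases}c\sqrt{s}\,\big(sK^{-\frac{1}{d+1}}\big)^{-1} & \text{if } s\ge K^{\frac{1}{d+1}},\\ c\sqrt{s}\,\big(sK^{-\frac{1}{d+1}}\big)^{-0.1} & \text{if } s<K^{\frac{1}{d+1}}.\end{cases} \] Let $g:(0,\infty)\to(0,\infty)$ be given by $g(\lambda)=10e^{-\lambda^2/4}$ if $\lambda\ge2$ and $g(\lambda)=10\log(1+2\lambda^{-1})$ if $0<\lambda<2$. Then \[ \sum_{i=0}^{\infty}\frac{K}{2^{i(d+1)}}\,g\Big(\frac{b(2^i)}{2^{i/2}}\Big)\le1. \]
   Context: $\log$ denotes the natural logarithm. *)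

From Stdlib Require Import Reals.
From Coquelicot Require Import Coquelicot.
Open Scope R_scope.

Definition cst (d : nat) : R := 10 * INR d + 2400.

Definition bfun (d : nat) (K : R) (s : nat) : R :=
  let t := Rpower K (1 / INR (d + 1)) in
  let x := INR s * Rpower K (- (1 / INR (d + 1))) in
  if Rle_dec t (INR s)
  then cst d * sqrt (INR s) * Rpower x (-1)
  else cst d * sqrt (INR s) * Rpower x (-(1/10)).

Definition gfun (l : R) : R :=
  if Rle_dec 2 l then 10 * exp (- (l ^ 2) / 4)
  else 10 * ln (1 + 2 / l).

Definition term (d : nat) (K : R) (i : nat) : R :=
  K / 2 ^ (i * (d + 1)) * gfun (bfun d K (2 ^ i) / Rpower 2 (INR i / 2)).

From Stdlib Require Import Reals Lra Lia.
From Coquelicot Require Import Coquelicot.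
Open Scope R_scope.

(* Write t = K^(1/(d+1)) and x = 2^i / t.  The i-th term is x^-(d+1) g(c phi(x)),
   where phi(x) = 1/x for x >= 1 and x^-0.1 for x < 1.  Both regimes are bounded
   by (20/c) m(c/(2x)), where m(r) = 1/r for r >= 1 and 3 sqrt r for r < 1: for
   x >= 1 use x^-(d+1) <= 1/x together with l e^(-l^2/4) <= 4/l and
   l log(1 + 2/l) <= 4 sqrt(l/2); for x < 1 the Gaussian factor
   exp(-c^2 x^-0.2 / 4) absorbs x^-(d+1) because c^2 >= 20 (d+2).  Along the
   halving sequence r = c t / 2^(i+1) the values of m sum to at most 13 (m is
   geometric on both sides of r = 1), so the series is at most 260/c <= 1. *)

Lemma mul_exp_opp_le_1 (z : R) : z * exp (- z) <= 1.
Proof.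
  rewrite exp_Ropp.
  pose proof (exp_ineq1_le z). pose proof (exp_pos z).
  apply (Rmult_le_reg_r (exp z)); [lra|].
  rewrite Rmult_assoc, Rinv_l; lra.
Qed.

Lemma ln_1_plus_le (a : R) : 0 <= a -> ln (1 + a) <= a.
Proof.
  intro Ha. rewrite <- (ln_exp a) at 2.
  apply ln_le; [lra | apply exp_ineq1_le].
Qed.

Lemma ln_1_plus_inv_sqr_le (w : R) : 0 < w -> ln (1 + / (w * w)) <= 2 / w.
Proof.
  intro Hw.
  assert (Hiw : 0 < / w) by (apply Rinv_0_lt_compat; lra).
  assert (Hiww : / (w * w) = / w * / w) by (field; lra).
  apply Rle_trans with (ln ((1 + / w) ^ 2)).
  - apply ln_le; [nra|]. simpl. nra.
  - rewrite ln_pow by lra. simpl INR.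
    pose proof (ln_1_plus_le (/ w) ltac:(lra)). unfold Rdiv. lra.
Qed.

Definition bump (r : R) : R := if Rle_dec 1 r then / r else 3 * sqrt r.

Lemma mul_gfun_le_bump (l : R) : 0 < l -> l * gfun l <= 20 * bump (l / 2).
Proof.
  intro Hl. unfold gfun, bump.
  destruct (Rle_dec 2 l) as [H2|H2]; destruct (Rle_dec 1 (l / 2)) as [H1|H1]; try lra.
  - pose proof (mul_exp_opp_le_1 (l ^ 2 / 4)).
    replace (- (l ^ 2) / 4) with (- (l ^ 2 / 4)) by field.
    replace (20 * / (l / 2)) with (40 / l) by (field; lra).
    apply (Rmult_le_reg_r l); [lra|].
    unfold Rdiv. rewrite (Rmult_assoc 40), Rinv_l by lra. simpl in *. nra.
  - set (w := sqrt (l / 2)).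
    assert (Hw : 0 < w) by (apply sqrt_lt_R0; lra).
    assert (Hww : w * w = l / 2) by (apply sqrt_sqrt; lra).
    replace (2 / l) with (/ (w * w)) by (rewrite Hww; field; lra).
    pose proof (ln_1_plus_inv_sqr_le w Hw).
    apply Rle_trans with (l * (10 * (2 / w))); [apply Rmult_le_compat_l; lra|].
    replace (l * (10 * (2 / w))) with (40 * w) by (field_simplify_eq; nra).
    lra.
Qed.

Lemma gfun_nonneg (l : R) : 0 < l -> 0 <= gfun l.
Proof.
  intro Hl. unfold gfun. destruct (Rle_dec 2 l).
  - pose proof (exp_pos (- (l ^ 2) / 4)). lra.
  - assert (0 < 2 / l) by (apply Rdiv_lt_0_compat; lra).
    pose proof (ln_le 1 (1 + 2 / l) ltac:(lra) ltac:(lra)) as Hln.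
    rewrite ln_1 in Hln. lra.
Qed.

Lemma exp_gaussian_tail_le (n : nat) (c L : R) :
  20 * (INR n + 1) <= c ^ 2 -> 0 <= L ->
  exp (INR n * L) * (10 * exp (- (c ^ 2 * exp (L / 5)) / 4))
  <= 40 / c ^ 2 * exp (- L).
Proof.
  intros Hc HL.
  pose proof (pos_INR n).
  assert (Hexp : c ^ 2 * (1 + L / 5) <= c ^ 2 * exp (L / 5))
    by (apply Rmult_le_compat_l; [nra | apply exp_ineq1_le]).
  assert (HnL : 20 * (INR n + 1) * L <= c ^ 2 * L)
    by (apply Rmult_le_compat_r; lra).
  assert (Hexponent : INR n * L - c ^ 2 * exp (L / 5) / 4 <= - L - c ^ 2 / 4)
    by lra.
  apply Rle_trans with (10 * (exp (- L) * exp (- (c ^ 2 / 4)))).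
  - rewrite <- exp_plus, Rmult_comm, Rmult_assoc, <- exp_plus.
    apply Rmult_le_compat_l; [lra|].
    destruct Hexponent as [Hlt | Heq].
    + left. apply exp_increasing. lra.
    + right. f_equal. lra.
  - pose proof (mul_exp_opp_le_1 (c ^ 2 / 4)). pose proof (exp_pos (- L)).
    pose proof (exp_pos (- (c ^ 2 / 4))).
    apply (Rmult_le_reg_r (c ^ 2 / 4)); [nra|].
    replace (40 / c ^ 2 * exp (- L) * (c ^ 2 / 4)) with (10 * exp (- L))
      by (field; nra).
    nra.
Qed.

Definition decay (x : R) : R := if Rle_dec 1 x then / x else Rpower x (- (1 / 10)).

Lemma profile_le_large (n : nat) (c x : R) :
  (1 <= n)%nat -> 0 < c -> 1 <= x ->
  (/ x) ^ n * gfun (c / x) <= 20 / c * bump (c / (2 * x)).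
Proof.
  intros Hn Hc Hx.
  assert (Hl : 0 < c / x) by (apply Rdiv_lt_0_compat; lra).
  assert (Hpow : (/ x) ^ n <= / x).
  { rewrite pow_inv. apply Rinv_le_contravar; [lra|].
    rewrite <- (pow_1 x) at 1. apply Rle_pow; assumption. }
  pose proof (gfun_nonneg _ Hl). pose proof (mul_gfun_le_bump _ Hl).
  replace (c / (2 * x)) with (c / x / 2) by (field; lra).
  apply Rle_trans with (/ x * gfun (c / x)); [apply Rmult_le_compat_r; lra|].
  replace (/ x * gfun (c / x)) with (/ c * (c / x * gfun (c / x))) by (field; lra).
  replace (20 / c * bump (c / x / 2)) with (/ c * (20 * bump (c / x / 2)))
    by (unfold Rdiv; ring).
  apply Rmult_le_compat_l; [apply Rlt_le, Rinv_0_lt_compat|]; lra.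
Qed.

Lemma profile_le_small (n : nat) (c x : R) :
  2 <= c -> 20 * (INR n + 1) <= c ^ 2 -> 0 < x < 1 ->
  (/ x) ^ n * gfun (c * Rpower x (- (1 / 10))) <= 20 / c * bump (c / (2 * x)).
Proof.
  intros Hc Hc2 Hx.
  set (L := - ln x).
  assert (HL : 0 <= L).
  { unfold L. pose proof (ln_le x 1 ltac:(lra) ltac:(lra)). rewrite ln_1 in *. lra. }
  assert (Hxe : x = exp (- L)) by (unfold L; rewrite Ropp_involutive, exp_ln; lra).
  assert (Hlam : Rpower x (- (1 / 10)) = exp (L / 10))
    by (unfold Rpower, L; f_equal; field).
  assert (Hlam1 : 1 <= exp (L / 10)) by (pose proof (exp_ineq1_le (L / 10)); lra).
  assert (Hbump : bump (c / (2 * x)) = 2 * x / c).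
  { unfold bump. destruct (Rle_dec 1 (c / (2 * x))) as [_|Hlt]; [field; lra|].
    exfalso. apply Hlt. apply (Rmult_le_reg_r (2 * x)); [lra|].
    unfold Rdiv. rewrite Rmult_assoc, Rinv_l; lra. }
  rewrite Hlam, Hbump. unfold gfun.
  destruct (Rle_dec 2 (c * exp (L / 10))) as [_|Hlt]; [|nra].
  replace ((c * exp (L / 10)) ^ 2) with (c ^ 2 * exp (L / 5))
    by (replace (L / 5) with (L / 10 + L / 10) by field; rewrite exp_plus; ring).
  assert (Hpow : (/ x) ^ n = exp (INR n * L)).
  { rewrite <- Rpower_pow by (apply Rinv_0_lt_compat; lra).
    unfold Rpower, L. rewrite ln_Rinv by lra. reflexivity. }
  rewrite Hpow.
  replace (20 / c * (2 * x / c)) with (40 / c ^ 2 * exp (- L)) by (rewrite <- Hxe; field; lra).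
  apply exp_gaussian_tail_le; assumption.
Qed.

Lemma profile_le (n : nat) (c x : R) :
  (1 <= n)%nat -> 2 <= c -> 20 * (INR n + 1) <= c ^ 2 -> 0 < x ->
  (/ x) ^ n * gfun (c * decay x) <= 20 / c * bump (c / (2 * x)).
Proof.
  intros Hn Hc Hc2 Hx. unfold decay. destruct (Rle_dec 1 x).
  - apply profile_le_large; [exact Hn | lra | lra].
  - apply profile_le_small; lra.
Qed.

Lemma decay_pos (x : R) : 0 < x -> 0 < decay x.
Proof.
  intro Hx. unfold decay, Rpower.
  destruct (Rle_dec 1 x); [apply Rinv_0_lt_compat; lra | apply exp_pos].
Qed.

Definition bump_potential (r : R) : R := if Rle_dec 1 r then 2 / r else 13 - 8 * sqrt r.

Lemma bump_le_potential (r : R) : 0 < r -> bump r <= bump_potential r.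
Proof.
  intro Hr. unfold bump, bump_potential. destruct (Rle_dec 1 r).
  - assert (0 < / r) by (apply Rinv_0_lt_compat; lra). unfold Rdiv. lra.
  - assert (sqrt r < 1) by (rewrite <- sqrt_1; apply sqrt_lt_1; lra).
    pose proof (sqrt_pos r). lra.
Qed.

Lemma bump_potential_le_13 (r : R) : 0 < r -> bump_potential r <= 13.
Proof.
  intro Hr. unfold bump_potential. destruct (Rle_dec 1 r).
  - apply (Rmult_le_reg_r r); [lra|].
    unfold Rdiv. rewrite Rmult_assoc, Rinv_l; lra.
  - pose proof (sqrt_pos r). lra.
Qed.

Lemma bump_potential_halve (r : R) :
  0 < r -> bump_potential r + bump (r / 2) <= bump_potential (r / 2).
Proof.
  intro Hr. unfold bump, bump_potential.
  assert (Hsqrt2 : 11 < 8 * sqrt 2)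
    by (pose proof (sqrt_sqrt 2 ltac:(lra)); pose proof (sqrt_pos 2); nra).
  assert (Hhalf : sqrt (r / 2) = sqrt r / sqrt 2) by (apply sqrt_div; lra).
  pose proof (sqrt_pos r).
  destruct (Rle_dec 1 (r / 2)); destruct (Rle_dec 1 r); try lra.
  - right. field. lra.
  - assert (sqrt (r / 2) < 1) by (rewrite <- sqrt_1; apply sqrt_lt_1; lra).
    assert (2 / r <= 2).
    { apply (Rmult_le_reg_r r); [lra|].
      unfold Rdiv. rewrite Rmult_assoc, Rinv_l; lra. }
    lra.
  - rewrite Hhalf.
    assert (sqrt r / sqrt 2 * 11 <= 8 * sqrt r).
    { apply (Rmult_le_reg_r (sqrt 2)); [lra|].
      replace (sqrt r / sqrt 2 * 11 * sqrt 2) with (11 * sqrt r) by (field; lra).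
      nra. }
    lra.
Qed.

Lemma sum_n_le_bump_halving (a : nat -> R) (C r : R) :
  0 <= C -> 0 < r -> (forall i, a i <= C * bump (r / 2 ^ i)) ->
  forall n, sum_n a n <= 13 * C.
Proof.
  intros HC Hr Ha n.
  assert (Hr_n : forall i, 0 < r / 2 ^ i)
    by (intro i; apply Rdiv_lt_0_compat; [lra | apply pow_lt; lra]).
  assert (Hpot : sum_n a n <= C * bump_potential (r / 2 ^ n)).
  { induction n as [|n IH].
    - rewrite sum_O. eapply Rle_trans; [apply Ha|].
      apply Rmult_le_compat_l; [lra | apply bump_le_potential, Hr_n].
    - rewrite sum_Sn. change (plus ?u ?v) with (u + v).
      replace (r / 2 ^ S n) with (r / 2 ^ n / 2)
        by (simpl; field; apply pow_nonzero; lra).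
      pose proof (Ha (S n)) as HaS.
      replace (r / 2 ^ S n) with (r / 2 ^ n / 2) in HaS
        by (simpl; field; apply pow_nonzero; lra).
      pose proof (bump_potential_halve _ (Hr_n n)). nra. }
  pose proof (bump_potential_le_13 _ (Hr_n n)). nra.
Qed.

Lemma is_series_nonneg_bounded (a : nat -> R) (B : R) :
  (forall n, 0 <= a n) -> (forall n, sum_n a n <= B) ->
  exists l, is_series a l /\ l <= B.
Proof.
  intros Ha HB.
  assert (Hincr : forall n, sum_n a n <= sum_n a (S n)).
  { intro n. rewrite sum_Sn. change (plus ?u ?v) with (u + v).
    pose proof (Ha (S n)). lra. }
  destruct (ex_finite_lim_seq_incr _ B Hincr HB) as [l Hl].
  exists l. split; [exact Hl|].
  apply (is_lim_seq_le _ _ l B HB Hl (is_lim_seq_const B)).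
Qed.

Lemma bfun_eq (d : nat) (K : R) (s : nat) :
  0 < K -> (0 < s)%nat ->
  bfun d K s = cst d * sqrt (INR s) * decay (INR s / Rpower K (1 / INR (d + 1))).
Proof.
  intros HK Hs. unfold bfun, decay.
  set (t := Rpower K (1 / INR (d + 1))).
  assert (Ht : 0 < t) by apply exp_pos.
  assert (Hs' : 0 < INR s) by (apply lt_0_INR; exact Hs).
  rewrite Rpower_Ropp. fold t. change (INR s * / t) with (INR s / t).
  destruct (Rle_dec t (INR s)) as [H1|H1]; destruct (Rle_dec 1 (INR s / t)) as [H2|H2].
  - replace (-1) with (- (1)) by ring.
    rewrite Rpower_Ropp, Rpower_1 by (apply Rdiv_lt_0_compat; lra). reflexivity.
  - exfalso. apply H2. apply (Rmult_le_reg_r t); [lra|].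
    unfold Rdiv. rewrite Rmult_assoc, Rinv_l; lra.
  - exfalso. apply H1. apply (Rmult_le_reg_r (/ t)); [apply Rinv_0_lt_compat; lra|].
    rewrite Rinv_r; lra.
  - reflexivity.
Qed.

Lemma div_pow_mul_eq (K : R) (n i : nat) :
  0 < K -> (0 < n)%nat ->
  K / 2 ^ (i * n) = (/ (2 ^ i / Rpower K (1 / INR n))) ^ n.
Proof.
  intros HK Hn.
  assert (HnR : 0 < INR n) by (apply lt_0_INR; exact Hn).
  assert (Hroot : Rpower K (1 / INR n) ^ n = K).
  { rewrite <- Rpower_pow by apply exp_pos.
    rewrite Rpower_mult. replace (1 / INR n * INR n) with 1 by (field; lra).
    apply Rpower_1, HK. }
  replace (/ (2 ^ i / Rpower K (1 / INR n))) with (Rpower K (1 / INR n) * / 2 ^ i)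
    by (field; split; [apply Rgt_not_eq, exp_pos | apply pow_nonzero; lra]).
  rewrite Rpow_mult_distr, pow_inv, Hroot, pow_mult. reflexivity.
Qed.

Lemma term_eq (d : nat) (K : R) (i : nat) :
  0 < K ->
  term d K i =
  (/ (2 ^ i / Rpower K (1 / INR (d + 1)))) ^ (d + 1) *
  gfun (cst d * decay (2 ^ i / Rpower K (1 / INR (d + 1)))).
Proof.
  intro HK. unfold term.
  assert (Hpow : INR (2 ^ i) = 2 ^ i) by (rewrite pow_INR; reflexivity).
  assert (Hp : 0 < 2 ^ i) by (apply pow_lt; lra).
  assert (Hsqrt : Rpower 2 (INR i / 2) = sqrt (2 ^ i)).
  { rewrite <- Rpower_sqrt, <- Rpower_pow, Rpower_mult by lra. reflexivity. }
  assert (Hsp : 0 < sqrt (2 ^ i)) by (apply sqrt_lt_R0; exact Hp).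
  rewrite div_pow_mul_eq by (assumption || lia).
  rewrite bfun_eq, Hpow, Hsqrt by (assumption || (apply Nat.neq_0_lt_0, Nat.pow_nonzero; lia)).
  f_equal. f_equal. field. lra.
Qed.

Theorem lemma3p2 (d : nat) (K : R) (hK : 0 < K) :
  exists l : R, is_series (term d K) l /\ l <= 1.
Proof.
  set (c := cst d). set (t := Rpower K (1 / INR (d + 1))).
  assert (Hc : 2400 <= c) by (pose proof (pos_INR d); unfold c, cst; lra).
  assert (Hc2 : 20 * (INR (d + 1) + 1) <= c ^ 2)
    by (rewrite plus_INR; simpl INR; pose proof (pos_INR d); unfold c, cst; nra).
  assert (Ht : 0 < t) by apply exp_pos.
  assert (Hx : forall i, 0 < 2 ^ i / t)
    by (intro i; apply Rdiv_lt_0_compat; [apply pow_lt; lra | exact Ht]).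
  apply is_series_nonneg_bounded.
  - intro i. rewrite term_eq by exact hK. fold c t.
    apply Rmult_le_pos.
    + apply pow_le, Rlt_le, Rinv_0_lt_compat, Hx.
    + apply gfun_nonneg, Rmult_lt_0_compat; [lra | apply decay_pos, Hx].
  - intro n. apply Rle_trans with (13 * (20 / c)).
    + apply (sum_n_le_bump_halving _ (20 / c) (c * t / 2)).
      * apply Rlt_le, Rdiv_lt_0_compat; lra.
      * apply Rdiv_lt_0_compat; nra.
      * intro i. rewrite term_eq by exact hK. fold c t.
        replace (c * t / 2 / 2 ^ i) with (c / (2 * (2 ^ i / t)))
          by (field; split; [apply pow_nonzero | ]; lra).
        apply profile_le; [lia | lra | exact Hc2 | apply Hx].
    + assert (/ c <= / 260) by (apply Rinv_le_contravar; lra).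
      unfold Rdiv. lra.
Qed.
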